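(* Let $G$ be an $(N,k)$ Adinkra with associated doubly even code $C$. Then $G$ has Klein flip degeneracy (i.e. the Adinkra obtained from $G$ by exchanging bosons and fermions is not equivalent to $G$) if and only if the all-ones word $(1,1,\dots,1)$ belongs to $C$. This in turn occurs only if $N\equiv 0\pmod 4$.
   Context: An Adinkra of dimension $N$ is a finite connected simple graph $G=(V,E)$ with: a bipartition of $V$ into bosons and fermions (every edge joins a boson and a fermion); a height function $\mathrm{hgt}:V\to\mathbb{Z}$ with adjacent vertices at heights differing by $1$; a coloring of $E$ by colors $\{1,\dots,N\}$ such that each vertex is incident to exactly one edge of each color; an edge parity $\pi:E\to\mathbb{Z}_2$ (parity $1$ = dashed); such that every path with edge colors $(i,j)$, $i\ne j$, lies in a unique 4-cycle with colors $(i,j,i,j)$, each having an odd number of dashed edges. If $|V|=2^{N-k}$, $G$ is an $(N,k)$ Adinkra. Switching a vertex reverses the parity of its incident edges. Two Adinkras are equivalent if there is a bijection between their vertex sets preserving adjacency, edge colors and the boson/fermion bipartition which becomes parity-preserving after switching some set of vertices (heights need not be preserved). A doubly even $(N,k)$ code is a $k$-dimensional subspace of $\mathbb{Z}_2^N$ all of whose elements have Hamming weight $\equiv0\pmod4$. Labeling the vertices of an $N$-cube Adinkra by $\mathbb{Z}_2^N$ so that color-$i$ edges join $v$ and $v+e_i$, every $(N,k)$ Adinkra is equivalent to one obtained by identifying vertices whose labels differ by elements of some doubly even $(N,k)$ code $C$; this $C$ is the associated code. *)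

From HB Require Import structures.
From mathcomp Require Import all_boot all_order all_algebra.
Set Implicit Arguments. Unset Strict Implicit. Unset Printing Implicit Defensive.
Import GRing.Theory.
Local Open Scope ring_scope.

(* Data of a (candidate) Adinkra of dimension N on a finite vertex type V.
   - adj   : the (simple) graph's adjacency relation
   - col   : edge colours (meaningful on edges only), colours are 'I_N = {1..N}
   - par   : edge parity (true = dashed, i.e. parity 1), meaningful on edges
   - boson : the bipartition (true = boson, false = fermion)
   - hgt   : the height function *)
Record adinkra_data (V : finType) (N : nat) := AdinkraData {
  adj : rel V;
  col : V -> V -> 'I_N;
  par : V -> V -> bool;
  boson : pred V;
  hgt : V -> int
}.

Definition is_adinkra (V : finType) (N : nat) (A : adinkra_data V N) : Prop :=
  (forall v, ~~ adj A v v) /\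
  (forall v w, adj A v w = adj A w v) /\
  (forall v w, adj A v w -> col A v w = col A w v) /\
  (forall v w, adj A v w -> par A v w = par A w v) /\
  (forall v w, connect (adj A) v w) /\
  (forall v w, adj A v w -> boson A v != boson A w) /\
  (forall v w, adj A v w -> (hgt A v + 1 == hgt A w) || (hgt A w + 1 == hgt A v)) /\
  (forall v (i : 'I_N), exists! w, adj A v w /\ col A v w = i) /\
  (forall (u v w : V) (i j : 'I_N), i != j ->
     adj A u v -> col A u v = i -> adj A v w -> col A v w = j ->
     exists! x, [/\ adj A w x, col A w x = i, adj A x u, col A x u = j &
                    odd (par A u v + par A v w + par A w x + par A x u)%N]).

(* Equivalence of Adinkras: bijection preserving adjacency, colours and the
   boson/fermion bipartition, parity-preserving after switching the vertices of
   some set S (switching a vertex reverses the parity of its incident edges).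
   Heights need not be preserved. *)
Definition adinkra_equiv (V1 V2 : finType) (N : nat)
    (A1 : adinkra_data V1 N) (A2 : adinkra_data V2 N) : Prop :=
  exists f : V1 -> V2,
    [/\ bijective f,
        (forall v w, adj A2 (f v) (f w) = adj A1 v w),
        (forall v w, adj A1 v w -> col A2 (f v) (f w) = col A1 v w),
        (forall v, boson A2 (f v) = boson A1 v) &
        exists S : {set V1}, forall v w, adj A1 v w ->
          par A2 (f v) (f w) = par A1 v w (+) (v \in S) (+) (w \in S)].

Definition klein_flip (V : finType) (N : nat) (A : adinkra_data V N)
  : adinkra_data V N :=
  AdinkraData (adj A) (col A) (par A) (predC (boson A)) (hgt A).

Definition hweight (N : nat) (x : 'rV['F_2]_N) : nat := #|[set i | x ord0 i != 0%R]|.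

Definition doubly_even_code (N k : nat) (C : {vspace 'rV['F_2]_N}) : Prop :=
  \dim C = k /\ forall c, c \in C -> (hweight c %% 4 = 0)%N.

Definition unitv (N : nat) (i : 'I_N) : 'rV['F_2]_N := delta_mx 0 i.

(* C is the associated code of A: A is equivalent to the Adinkra obtained from
   the N-cube (vertices labelled by Z_2^N, colour-i edges joining x and x+e_i)
   by identifying labels differing by elements of C.  Concretely: there is a
   surjective map q from the labels onto V identifying exactly the C-cosets,
   sending each colour-i cube edge {x, x+e_i} to a colour-i edge of A, and
   sending the cube's boson/fermion bipartition (by parity of weight) to that
   of A. (Dashing and heights of the quotient are those transported from A.) *)
Definition associated_code (V : finType) (N : nat) (A : adinkra_data V N)
    (C : {vspace 'rV['F_2]_N}) : Prop :=
  exists q : 'rV['F_2]_N -> V,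
    [/\ (forall v, exists x, q x = v),
        (forall x y, q x = q y <-> x - y \in C),
        (forall x (i : 'I_N), adj A (q x) (q (x + unitv i)) /\
                             col A (q x) (q (x + unitv i)) = i) &
        exists b : bool, forall x, boson A (q x) = b (+) odd (hweight x)].

Definition all_ones (N : nat) : 'rV['F_2]_N := const_mx 1.

(* Pull the dashing of A back to the N-cube through the quotient map q.  By the
   odd 4-cycle rule it differs from the standard cube dashing by a closed, hence
   exact, 1-cochain dh: up to C, A is the standard cube Adinkra switched by h.
   An equivalence with the Klein flip preserves colours, so it is a translation
   by a word t, of odd weight because bosons and fermions are exchanged.
   Translation by t changes the standard dashing by the switching
   x |-> <x, tau t>, tau t being the prefix parities of t, and the switching
   descends to V = cube / C exactly when the defect
   <t, tau c> + <c, tau t> = |t||c| + <t, c> vanishes for c in C; as C is even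
   this is <t, c>.  If 1 is not in C there is an odd t orthogonal to C, while if
   1 is in C every odd t has <t, 1> = 1.  Finally 1 in C makes N = |1| divisible
   by 4. *)

From Pilot Require Import Defs.
From mathcomp Require Import all_boot all_order all_algebra.
Import GRing.Theory.
Set Implicit Arguments. Unset Strict Implicit. Unset Printing Implicit Defensive.
Local Open Scope ring_scope.

Notation "\xor_ ( i < n ) F" := (\big[addb/false]_(i < n) F)
  (at level 41, F at level 41, i, n at level 50).

Lemma F2_neq0D (a b : 'F_2) : (a + b != 0) = (a != 0) (+) (b != 0).
Proof. by case: a => [[|[|//]] ?]; case: b => [[|[|//]] ?]. Qed.

Lemma F2_neq0M (a b : 'F_2) : (a * b != 0) = (a != 0) && (b != 0).
Proof. by case: a => [[|[|//]] ?]; case: b => [[|[|//]] ?]. Qed.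

Lemma F2_neq0_inj (a b : 'F_2) : (a != 0) = (b != 0) -> a = b.
Proof. by case: a => [[|[|//]] ?]; case: b => [[|[|//]] ?] //= _; apply: val_inj. Qed.

Lemma F2_0or1 (a : 'F_2) : a = 0 \/ a = 1.
Proof. by case: a => [[|[|//]] ?]; [left|right]; apply: val_inj. Qed.

Section Bits.
Variable N : nat.
Implicit Types x y : 'rV['F_2]_N.

(* Bits are indexed by [nat] so that prefixes [\xor_(m < i)] make sense; bits
   beyond [N] are [false]. *)
Definition bit x (j : nat) : bool :=
  if insub j : option 'I_N is Some o then x 0 o != 0 else false.

Lemma bitE x (o : 'I_N) : bit x o = (x 0 o != 0).
Proof. by rewrite /bit valK. Qed.

Lemma bitD x y j : bit (x + y) j = bit x j (+) bit y j.
Proof. by rewrite /bit; case: insubP => // o _ _; rewrite mxE F2_neq0D. Qed.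

Lemma bit0 j : bit 0 j = false.
Proof. by rewrite /bit; case: insubP => // o _ _; rewrite mxE eqxx. Qed.

Lemma bit_unitv (i : 'I_N) j : bit (unitv i) j = (j == i).
Proof.
rewrite /bit /unitv; case: insubP => [o _ <-|ltjN]; last first.
  by apply/esym/negbTE; apply: contra ltjN => /eqP ->.
by rewrite mxE eqxx /=; case: (altP (o =P i)) => [->|/negbTE oi];
  rewrite ?eqxx ?oner_neq0 // oi eqxx.
Qed.

Lemma bit_all_ones j : bit (all_ones N) j = (j < N)%N.
Proof.
by rewrite /bit; case: insubP => [o -> _|/negbTE -> //]; rewrite mxE oner_neq0.
Qed.

Lemma bitP x y : (forall j, bit x j = bit y j) -> x = y.
Proof. by move=> h; apply/rowP => o; apply: F2_neq0_inj; rewrite -!bitE. Qed.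

Lemma addrr_F2 x : x + x = 0.
Proof. by apply: bitP => j; rewrite bitD bit0 addbb. Qed.

Lemma oppr_F2 x : - x = x.
Proof. by rewrite -[LHS]add0r -(addrr_F2 x) addrK. Qed.

Lemma addrKF2 x y : x + y + y = x.
Proof. by rewrite -addrA addrr_F2 addr0. Qed.

Lemma odd_hweight x : odd (hweight x) = \xor_(j < N) bit x j.
Proof.
rewrite /hweight -sum1dep_card big_mkcond /=.
rewrite (big_morph odd oddD (erefl : odd 0 = false)); apply: eq_bigr => o _.
by rewrite bitE; case: (x 0 o != 0).
Qed.

Lemma hweight0 : hweight (0 : 'rV['F_2]_N) = 0%N.
Proof.
by rewrite /hweight; apply/eqP; rewrite cards_eq0; apply/eqP/setP => i; rewrite !inE mxE eqxx.
Qed.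

Lemma odd_hweightD x y : odd (hweight (x + y)) = odd (hweight x) (+) odd (hweight y).
Proof. by rewrite !odd_hweight -big_split; apply: eq_bigr => j _; rewrite bitD. Qed.

Lemma hweight_all_ones : hweight (all_ones N) = N.
Proof.
rewrite /hweight -[RHS]card_ord -cardsT; congr #|pred_of_set _|.
by apply/setP => i; rewrite !inE mxE oner_neq0.
Qed.

Lemma row_F2_ind (P : 'rV['F_2]_N -> Prop) :
  P 0 -> (forall x i, P x -> P (x + unitv i)) -> forall x, P x.
Proof.
move=> P0 PS x; rewrite -[x]add0r; move: P0; move: (0 : 'rV_N) => y.
rewrite (row_sum_delta x); elim/big_rec: _ y => [y|j z _ IHz y Py]; first by rewrite addr0.
rewrite addrA; apply: IHz; case: (F2_0or1 (x 0 j)) => ->.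
  by rewrite scale0r addr0.
by rewrite scale1r; apply: PS.
Qed.

Definition bdot x (a : nat -> bool) : bool := \xor_(j < N) (bit x j && a j).

Lemma bdotDl x y a : bdot (x + y) a = bdot x a (+) bdot y a.
Proof. by rewrite /bdot -big_split; apply: eq_bigr => j _; rewrite bitD andb_addl. Qed.

Lemma bdot0 a : bdot 0 a = false.
Proof. by rewrite /bdot big1 // => j _; rewrite bit0. Qed.

Lemma bdot_unitv (i : 'I_N) a : bdot (unitv i) a = a i.
Proof.
rewrite /bdot (bigD1 i) //= bit_unitv eqxx big1 ?addbF // => j ji.
by rewrite bit_unitv (inj_eq val_inj) (negbTE ji).
Qed.

Lemma bdot_all_ones x : bdot x (bit (all_ones N)) = odd (hweight x).
Proof.
by rewrite odd_hweight; apply: eq_bigr => j _; rewrite bit_all_ones ltn_ord andbT.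
Qed.

Lemma bdot_of_increments (F : 'rV['F_2]_N -> bool) (a : nat -> bool) :
  (forall x i, F (x + unitv i) = F x (+) a i) -> forall x, F x = F 0 (+) bdot x a.
Proof.
move=> FS; apply: row_F2_ind => [|x i Fx]; first by rewrite bdot0 addbF.
by rewrite FS Fx bdotDl bdot_unitv addbA.
Qed.

(* The standard dashing of the N-cube: the colour-i edge at x is dashed iff
   x has an odd number of ones before position i. *)
Definition cube_dash x (i : nat) : bool := \xor_(m < i) bit x m.

Lemma cube_dashD x y i : cube_dash (x + y) i = cube_dash x i (+) cube_dash y i.
Proof. by rewrite /cube_dash -big_split; apply: eq_bigr => j _; rewrite bitD. Qed.

Lemma cube_dash_unitv (k : 'I_N) i : cube_dash (unitv k) i = (k < i)%N.
Proof.
elim: i => [|i IH]; first by rewrite /cube_dash big_ord0.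
rewrite /cube_dash big_ord_recr /= -/(cube_dash _ _) IH bit_unitv ltnS.
by case: (ltngtP k i) => // ->; rewrite eqxx ltnn.
Qed.

Lemma xor_prefix_sym n (u v : nat -> bool) :
  \xor_(j < n) (u j && \xor_(m < j) v m) (+) \xor_(j < n) (v j && \xor_(m < j) u m)
  = ((\xor_(j < n) u j) && (\xor_(j < n) v j)) (+) \xor_(j < n) (u j && v j).
Proof.
elim: n => [|n IH]; first by rewrite !big_ord0.
rewrite !big_ord_recr /=; move: IH; move: (u n) (v n).
move: (\xor_(i < n) (u i && v i)) (\xor_(i < n) u i) (\xor_(i < n) v i).
move: (\xor_(i < n) (u i && \xor_(m < i) v m)) (\xor_(i < n) (v i && \xor_(m < i) u m)).
by do 7!case.
Qed.

Lemma bdot_cube_dashC x y :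
  bdot x (cube_dash y) (+) bdot y (cube_dash x)
  = (odd (hweight x) && odd (hweight y)) (+) bdot x (bit y).
Proof. by rewrite !odd_hweight; apply: xor_prefix_sym. Qed.

(* Extend [h] one coordinate at a time: on the half-cube [bit x m], define [h]
   by transport along the colour-m edges; closedness makes this consistent. *)
Lemma cube_cocycle_exact (g : 'rV['F_2]_N -> 'I_N -> bool) :
  (forall x i, g (x + unitv i) i = g x i) ->
  (forall x i j, i != j -> g (x + unitv i) j (+) g x j = g (x + unitv j) i (+) g x i) ->
  exists h : 'rV['F_2]_N -> bool, forall x i, h (x + unitv i) (+) h x = g x i.
Proof.
move=> g_edge g_closed.
suff /(_ N (leqnn N)) [h dh] : forall m, (m <= N)%N -> exists h : 'rV['F_2]_N -> bool,
    forall x (i : 'I_N), (i < m)%N -> h (x + unitv i) (+) h x = g x i.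
  by exists h => x i; apply: dh.
elim=> [|m IH] ltmN; first by exists (fun _ => false).
pose o : 'I_N := Ordinal ltmN.
have [h dh] := IH (ltnW ltmN).
exists (fun x => if bit x m then h (x + unitv o) (+) g (x + unitv o) o else h x).
move=> x i; rewrite ltnS leq_eqVlt => /orP[/eqP im | ltim].
  have -> : i = o by apply: val_inj.
  rewrite bitD bit_unitv eqxx addbT; case: (bit x m) => /=.
    by rewrite addbA addbb g_edge.
  by rewrite addrKF2 addbAC addbb.
rewrite bitD bit_unitv (gtn_eqF ltim) addbF; case: (bit x m); last exact: dh.
have io : i != o by rewrite neq_ltn ltim.
rewrite (addrAC x (unitv i)); set y := x + unitv o.
have := g_closed y i o io; rewrite /y addrKF2 -/y.
by move=> E; rewrite addbACA dh // E addbCA addbb addbF.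
Qed.

Lemma mulmx_row_F2_neq0 c (T : 'M['F_2]_N) j :
  ((c *m T) 0 j != 0) = \xor_(m < N) (bit c m && (T m j != 0)).
Proof.
have neq00 : ((0 : 'F_2) != 0) = false by rewrite eqxx.
rewrite mxE (big_morph (fun a : 'F_2 => a != 0) F2_neq0D neq00).
by apply: eq_bigr => m _; rewrite F2_neq0M bitE.
Qed.

Lemma odd_orthogonal_word (C : {vspace 'rV['F_2]_N}) : all_ones N \notin C ->
  exists t, odd (hweight t) /\ forall c, c \in C -> bdot t (bit c) = false.
Proof.
move=> notC1.
pose B : 'M['F_2]_(\dim C, N) := \matrix_(i < \dim C) tnth (vbasis C) i.
have subB c : c \in C -> (c <= B)%MS.
  move=> /coord_vbasis ->; apply: summx_sub => i _; apply: scalemx_sub.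
  by rewrite -(tnth_nth 0) -(rowK (fun i => tnth (vbasis C) i)) row_sub.
have notB1 : ~~ (all_ones N <= B)%MS.
  apply: contra notC1 => /submxP [D ->]; rewrite mulmx_sum_row.
  apply: memv_suml => i _; apply: memvZ; rewrite rowK.
  by apply: vbasis_mem; apply: mem_tnth.
set T := cokermx B.
have [j T1j] : exists j, (all_ones N *m T) 0 j != 0.
  apply/existsP; apply: contraR notB1 => /existsPn T1; rewrite submxE; apply/eqP.
  by apply/rowP => k; rewrite [RHS]mxE; apply/eqP/negPn; apply: T1.
exists (col j T)^T; split.
  apply: etrans T1j; rewrite odd_hweight mulmx_row_F2_neq0; apply: eq_bigr => m _.
  by rewrite bit_all_ones ltn_ord bitE !mxE.
move=> c /subB; rewrite submxE -/T => /eqP cT.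
have : ((c *m T) 0 j != 0) = false by rewrite cT mxE eqxx.
rewrite mulmx_row_F2_neq0 => <-; apply: eq_bigr => m _.
by rewrite andbC (bitE (col j T)^T) !mxE.
Qed.

End Bits.

Section CodeQuotient.
Variables (N : nat) (V : finType) (A : adinkra_data V N).
Variables (C : {vspace 'rV['F_2]_N}) (q : 'rV['F_2]_N -> V) (b : bool).
Hypothesis parC : forall v w, adj A v w -> par A v w = par A w v.
Hypothesis col_uniq : forall v (i : 'I_N), exists! w, adj A v w /\ Defs.col A v w = i.
Hypothesis square_odd : forall (u v w : V) (i j : 'I_N), i != j ->
  adj A u v -> Defs.col A u v = i -> adj A v w -> Defs.col A v w = j ->
  exists! x, [/\ adj A w x, Defs.col A w x = i, adj A x u, Defs.col A x u = j &
                 odd (par A u v + par A v w + par A w x + par A x u)%N].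
Hypothesis q_surj : forall v, exists x, q x = v.
Hypothesis q_eq : forall x y, q x = q y <-> x - y \in C.
Hypothesis q_edge : forall x (i : 'I_N),
  adj A (q x) (q (x + unitv i)) /\ Defs.col A (q x) (q (x + unitv i)) = i.
Hypothesis q_boson : forall x, boson A (q x) = b (+) odd (hweight x).
Hypothesis C_even : forall c, c \in C -> ~~ odd (hweight c).

Lemma q_eqP x y : q x = q y <-> x + y \in C.
Proof. by have := q_eq x y; rewrite oppr_F2. Qed.

Lemma q_addC x c : c \in C -> q (x + c) = q x.
Proof. by move=> Cc; apply/q_eqP; rewrite addrAC addrr_F2 add0r. Qed.

Lemma q_addr x y z : q x = q y -> q (x + z) = q (y + z).
Proof. by move/q_eqP => Cxy; apply/q_eqP; rewrite addrACA addrr_F2 addr0. Qed.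

Definition qrep v := odflt 0 [pick x | q x == v].

Lemma qrepK v : q (qrep v) = v.
Proof.
rewrite /qrep; case: pickP => [x /eqP //|noq].
by have [x qx] := q_surj v; move: (noq x); rewrite qx eqxx.
Qed.

Lemma q_nbr x i w : adj A (q x) w -> Defs.col A (q x) w = i -> w = q (x + unitv i).
Proof.
move=> xw cxw; have [w0 [_ w0_uniq]] := col_uniq (q x) i.
by rewrite -(w0_uniq w (conj xw cxw)) (w0_uniq _ (q_edge x i)).
Qed.

Lemma q_edge_translate x y z : adj A (q x) (q y) ->
  adj A (q (x + z)) (q (y + z)) /\ Defs.col A (q (x + z)) (q (y + z)) = Defs.col A (q x) (q y).
Proof. by move=> xy; rewrite (q_addr z (q_nbr xy erefl)) addrAC; apply: q_edge. Qed.

Definition dash x (i : 'I_N) := par A (q x) (q (x + unitv i)).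

Lemma dash_sym x i : par A (q (x + unitv i)) (q x) = dash x i.
Proof. by rewrite /dash [RHS]parC //; case: (q_edge x i). Qed.

Lemma dash_unitv x i : dash (x + unitv i) i = dash x i.
Proof. by rewrite /dash addrKF2 dash_sym. Qed.

Lemma dash_code x c i : c \in C -> dash (x + c) i = dash x i.
Proof. by move=> Cc; rewrite /dash q_addC // addrAC q_addC. Qed.

Lemma dash_square x i j : i != j ->
  dash x i (+) dash (x + unitv i) j (+) dash (x + unitv j) i (+) dash x j.
Proof.
move=> ij; have [xi cxi] := q_edge x i; have [xij cxij] := q_edge (x + unitv i) j.
have [z [[xijz cxijz zx czx]]] := square_odd ij xi cxi xij cxij.
have -> : z = q (x + unitv j) by rewrite (q_nbr xijz cxijz) (addrAC _ (unitv j)) addrKF2.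
have dash_ji : par A (q (x + unitv i + unitv j)) (q (x + unitv j)) = dash (x + unitv j) i.
  by rewrite (addrAC x (unitv i)) dash_sym.
by rewrite dash_ji dash_sym !oddD !oddb => + _.
Qed.

Lemma dash_switch_cube :
  exists h, forall x i, h (x + unitv i) (+) h x = dash x i (+) cube_dash x i.
Proof.
apply: cube_cocycle_exact => [x i|x i j ij].
  by rewrite dash_unitv cube_dashD cube_dash_unitv ltnn addbF.
rewrite !cube_dashD !cube_dash_unitv.
have ltij : (i < j)%N (+) (j < i)%N by move: ij; rewrite neq_ltn; case: ltngtP.
move: (dash_square x ij) ltij.
move: (dash x i) (dash x j) (dash (x + unitv i) j) (dash (x + unitv j) i).
move: (cube_dash x i) (cube_dash x j) (i < j)%N (j < i)%N.
by do 8!case.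
Qed.

Lemma klein_flip_equiv_translation : adinkra_equiv A (klein_flip A) ->
  exists t (s : 'rV['F_2]_N -> bool),
  [/\ odd (hweight t), forall x c, c \in C -> s (x + c) = s x &
      forall x i, dash (x + t) i = dash x i (+) s x (+) s (x + unitv i)].
Proof.
move=> [f [_ f_adj f_col f_boson [S f_par]]]; simpl in f_adj, f_col, f_boson, f_par.
have [t qt] := q_surj (f (q 0)).
have fq x : f (q x) = q (x + t).
  elim/row_F2_ind: x => [|x i fqx]; first by rewrite add0r.
  have [xi cxi] := q_edge x i.
  rewrite -f_col // fqx in cxi; rewrite -f_adj fqx in xi.
  by rewrite (q_nbr xi cxi) addrAC.
exists t, (fun x => q x \in S); split=> [|x c Cc|x i]; last 2 first.
- by rewrite q_addC.
- by have [xi _] := q_edge x i; have := f_par _ _ xi; rewrite !fq (addrAC x).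
have := f_boson (q 0); rewrite fq add0r !q_boson hweight0 /=.
by case: (odd _); case: b.
Qed.

Section SwitchedToCube.
Variable h : 'rV['F_2]_N -> bool.
Hypothesis h_grad : forall x i, h (x + unitv i) (+) h x = dash x i (+) cube_dash x i.

Lemma h_code_defect c x : c \in C ->
  h (x + c) (+) h x = h c (+) h 0 (+) bdot x (cube_dash c).
Proof.
move=> Cc; have := bdot_of_increments (F := fun y => h (y + c) (+) h y) (a := cube_dash c).
rewrite add0r; apply=> {}x i.
have := h_grad (x + c) i; have := h_grad x i.
rewrite dash_code // cube_dashD (addrAC x (unitv i)).
move: (h (x + c + unitv i)) (h (x + c)) (h (x + unitv i)) (h x).
by move: (dash x i) (cube_dash x i) (cube_dash c i); do 7!case.
Qed.

Definition hdiff t x := h (x + t) (+) h x.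

Lemma hdiff_code t x c : c \in C -> hdiff t (x + c) (+) hdiff t x = bdot t (cube_dash c).
Proof.
move=> Cc; rewrite /hdiff addbACA (addrAC x c) !h_code_defect // bdotDl.
by rewrite addbACA addbb addFb addbAC addbb.
Qed.

Lemma hdiff_unitv t x i :
  hdiff t (x + unitv i) (+) hdiff t x = dash (x + t) i (+) dash x i (+) cube_dash t i.
Proof.
rewrite /hdiff addbACA (addrAC x (unitv i)) !h_grad cube_dashD.
move: (dash (x + t) i) (dash x i) (cube_dash x i) (cube_dash t i).
by do 4!case.
Qed.

Lemma klein_flip_equiv_of_odd_dual (t : 'rV['F_2]_N) : odd (hweight t) ->
  (forall c, c \in C -> bdot t (bit c) = false) -> adinkra_equiv A (klein_flip A).
Proof.
move=> odd_t t_perp.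
pose f v := q (qrep v + t).
have fq x : f (q x) = q (x + t) by apply: q_addr; rewrite qrepK.
have ff v : f (f v) = v by have [x <-] := q_surj v; rewrite !fq addrKF2.
pose s x := hdiff t x (+) bdot x (cube_dash t).
have s_code x c : c \in C -> s (x + c) = s x.
  move=> Cc; have := bdot_cube_dashC t c; have := hdiff_code t x Cc.
  rewrite /s bdotDl t_perp // (negbTE (C_even Cc)) andbF.
  move: (hdiff t (x + c)) (hdiff t x) (bdot x (cube_dash t)).
  by move: (bdot t (cube_dash c)) (bdot c (cube_dash t)); do 5!case.
pose S := [set v | s (qrep v)].
have S_q x : (q x \in S) = s x.
  rewrite inE -(s_code (qrep (q x)) (qrep (q x) + x)) ?addrA ?addrr_F2 ?add0r //.
  by apply/q_eqP; rewrite qrepK.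
exists f; split=> [|v w|v w|v|]; first by exists f.
- have [x <-] := q_surj v; have [y <-] := q_surj w; rewrite /= !fq.
  apply/idP/idP => [/(q_edge_translate t)|/(q_edge_translate t)[] //].
  by rewrite !addrKF2 => -[].
- have [x <-] := q_surj v; have [y <-] := q_surj w => /= xy.
  by rewrite !fq; case: (q_edge_translate t xy).
- have [x <-] := q_surj v; rewrite /= fq !q_boson odd_hweightD odd_t.
  by rewrite addbT addbN negbK.
exists S => v w; have [x <-] := q_surj v; have [y <-] := q_surj w => /= xy.
set i := Defs.col A (q x) (q y); rewrite (q_nbr xy erefl) !fq (addrAC x) !S_q.
rewrite -/(dash (x + t) i) -/(dash x i) /s bdotDl bdot_unitv.
have := hdiff_unitv t x i.
move: (hdiff t x) (hdiff t (x + unitv i)) (dash (x + t) i) (dash x i).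
move: (cube_dash t i) (bdot x (cube_dash t)).
by do 6!case.
Qed.

Lemma no_klein_flip_equiv : all_ones N \in C -> ~ adinkra_equiv A (klein_flip A).
Proof.
move=> C1 /klein_flip_equiv_translation [t [s [odd_t s_code dash_t]]].
have r_incr x i : s (x + unitv i) (+) hdiff t (x + unitv i)
                  = s x (+) hdiff t x (+) cube_dash t i.
  have := hdiff_unitv t x i; rewrite dash_t.
  move: (hdiff t x) (hdiff t (x + unitv i)) (s x) (s (x + unitv i)).
  by move: (dash x i) (cube_dash t i); do 6!case.
have s1 : s (all_ones N) = s 0 by rewrite -[all_ones N]add0r s_code.
have := bdot_of_increments r_incr (all_ones N).
have := hdiff_code t 0 C1; have := bdot_cube_dashC t (all_ones N).
rewrite add0r s1 bdot_all_ones odd_t (negbTE (C_even C1)).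
move: (s 0) (hdiff t 0) (hdiff t (all_ones N)).
move: (bdot t (cube_dash (all_ones N))) (bdot (all_ones N) (cube_dash t)).
by do 5!case.
Qed.

End SwitchedToCube.
End CodeQuotient.

Local Close Scope ring_scope.
Theorem mainTheorem7 (N k : nat) (V : finType) (A : adinkra_data V N)
    (C : {vspace 'rV['F_2]_N}) :
  is_adinkra A -> #|V| = 2 ^ (N - k) ->
  doubly_even_code k C -> associated_code A C ->
  ((~ adinkra_equiv A (klein_flip A)) <-> all_ones N \in C) /\
  (all_ones N \in C -> N %% 4 = 0).
Proof.
move=> [_ [_ [_ [parC [_ [_ [_ [col_uniq square_odd]]]]]]]] _ [_ C_dev].
move=> [q [q_surj q_eq q_edge [b q_boson]]].
have C_even c : c \in C -> ~~ odd (hweight c).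
  by move=> /C_dev/eqP; rewrite -/(4 %| _) -dvdn2 => d4w; apply: dvdn_trans d4w.
have [h h_grad] := dash_switch_cube parC col_uniq square_odd q_edge.
split; last by move=> /C_dev; rewrite hweight_all_ones.
split=> [no_equiv|].
  apply/negPn/negP => notC1; apply: no_equiv.
  have [t [odd_t t_perp]] := odd_orthogonal_word notC1.
  exact: (klein_flip_equiv_of_odd_dual col_uniq q_surj q_eq q_edge q_boson C_even h_grad odd_t).
exact: (no_klein_flip_equiv col_uniq q_surj q_eq q_edge q_boson C_even h_grad).
Qed.
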